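(* Let $S$ be a quasi-adequate semigroup with an admissible adequate transversal $S^0$. Then for all $x,y\in S$, $\overline{xy}=\overline{\overline{x}f_xe_y\overline{y}}$.
   Context: For a semigroup $S$, $S^1$ is $S$ with an identity adjoined, $\mathcal{L},\mathcal{R}$ Green's relations. $\mathcal{R}^\ast=\{(a,b):\forall x,y\in S^1,\ xa=ya\iff xb=yb\}$, $\mathcal{L}^\ast=\{(a,b):\forall x,y\in S^1,\ ax=ay\iff bx=by\}$. $S$ is abundant if each $\mathcal{R}^\ast$- and $\mathcal{L}^\ast$-class contains an idempotent; adequate if also idempotents commute (then $a^+$, $a^\ast$ are the unique idempotents $\mathcal{R}^\ast$-, resp. $\mathcal{L}^\ast$-related to $a$). Quasi-adequate: abundant with idempotents forming a subsemigroup. An abundant subsemigroup $U$ of abundant $S$ is a $\ast$-subsemigroup if $\mathcal{L}^\ast(U)=\mathcal{L}^\ast(S)\cap(U\times U)$, $\mathcal{R}^\ast(U)=\mathcal{R}^\ast(S)\cap(U\times U)$. An adequate $\ast$-subsemigroup $S^0$ of abundant $S$ is an adequate transversal if each $x\in S$ has a unique $\overline{x}\in S^0$ and idempotents $e,f$ of $S$ (then unique, written $e_x,f_x$) with $x=e\overline{x}f$, $e\,\mathcal{L}\,\overline{x}^+$, $f\,\mathcal{R}\,\overline{x}^\ast$. It is admissible if $\overline{xy}=\overline{x}\,\overline{y}$ for all $x,y\in S$. *)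

Set Implicit Arguments.
Unset Strict Implicit.

Section Semigroup.
Variables (S : Type) (mul : S -> S -> S).

Definition associative_op : Prop := forall a b c, mul a (mul b c) = mul (mul a b) c.

Definition idem (e : S) : Prop := mul e e = e.

(* S^1 : elements of S with an adjoined identity (None). *)
Definition lmul1 (u : option S) (a : S) : S :=
  match u with None => a | Some z => mul z a end.
Definition rmul1 (a : S) (u : option S) : S :=
  match u with None => a | Some z => mul a z end.

Definition in1 (U : S -> Prop) (u : option S) : Prop :=
  match u with None => True | Some z => U z end.

Definition fullset : S -> Prop := fun _ => True.

Definition subsemigroup (U : S -> Prop) : Prop :=
  forall a b, U a -> U b -> U (mul a b).

Definition GreenL (a b : S) : Prop :=
  exists u v : option S, a = lmul1 u b /\ b = lmul1 v a.
Definition GreenR (a b : S) : Prop :=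
  exists u v : option S, a = rmul1 b u /\ b = rmul1 a v.

(* R^* and L^* computed inside the subsemigroup U (U = fullset gives S). *)
Definition Rstar_in (U : S -> Prop) (a b : S) : Prop :=
  forall x y, in1 U x -> in1 U y ->
    (lmul1 x a = lmul1 y a <-> lmul1 x b = lmul1 y b).
Definition Lstar_in (U : S -> Prop) (a b : S) : Prop :=
  forall x y, in1 U x -> in1 U y ->
    (rmul1 a x = rmul1 a y <-> rmul1 b x = rmul1 b y).

Definition abundant_in (U : S -> Prop) : Prop :=
  forall a, U a ->
    (exists e, U e /\ idem e /\ Rstar_in U a e) /\
    (exists e, U e /\ idem e /\ Lstar_in U a e).

Definition abundant : Prop := abundant_in fullset.

Definition quasi_adequate : Prop :=
  abundant /\ forall e f, idem e -> idem f -> idem (mul e f).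

Definition adequate_in (U : S -> Prop) : Prop :=
  abundant_in U /\
  forall e f, U e -> U f -> idem e -> idem f -> mul e f = mul f e.

Definition star_subsemigroup (U : S -> Prop) : Prop :=
  subsemigroup U /\ abundant_in U /\
  forall a b, U a -> U b ->
    (Lstar_in U a b <-> Lstar_in fullset a b) /\
    (Rstar_in U a b <-> Rstar_in fullset a b).

Definition is_plus (U : S -> Prop) (a p : S) : Prop :=
  U p /\ idem p /\ Rstar_in U a p.
Definition is_star (U : S -> Prop) (a p : S) : Prop :=
  U p /\ idem p /\ Lstar_in U a p.

Definition tdecomp (S0 : S -> Prop) (x xb e f : S) : Prop :=
  S0 xb /\ idem e /\ idem f /\ x = mul (mul e xb) f /\
  (exists p, is_plus S0 xb p /\ GreenL e p) /\
  (exists q, is_star S0 xb q /\ GreenR f q).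

Definition adequate_transversal (S0 : S -> Prop) : Prop :=
  abundant /\ adequate_in S0 /\ star_subsemigroup S0 /\
  forall x, exists xb, (exists e f, tdecomp S0 x xb e f) /\
    forall xb', (exists e f, tdecomp S0 x xb' e f) -> xb' = xb.

End Semigroup.

From Stdlib Require Import Setoid.

Set Implicit Arguments.
Unset Strict Implicit.

(* Since [bar] is a morphism onto S0 fixing S0 pointwise, it maps the
   R-relation [f_x R (bar x)^*] to an R-relation between two idempotents of
   the adequate S0, which must then be equal: [bar f_x = (bar x)^*], and
   dually [bar e_y = (bar y)^+].  Hence
   [bar (bar x f_x e_y bar y) = bar x (bar x)^* (bar y)^+ bar y = bar x bar y]. *)

Section Green.
Variables (S : Type) (mul : S -> S -> S).
Hypothesis assoc : associative_op mul.

Lemma GreenL_sym a b : GreenL mul a b -> GreenL mul b a.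
Proof. intros [u [v [E F]]]. exists v, u. split; assumption. Qed.

Lemma GreenR_sym a b : GreenR mul a b -> GreenR mul b a.
Proof. intros [u [v [E F]]]. exists v, u. split; assumption. Qed.

Lemma GreenL_idem_mulr e f : idem mul f -> GreenL mul e f -> mul e f = e.
Proof.
  intros Hf [[u|] [v [E _]]]; simpl in E; rewrite E; [|exact Hf].
  rewrite <- assoc, Hf. reflexivity.
Qed.

Lemma GreenR_idem_mull e f : idem mul f -> GreenR mul e f -> mul f e = e.
Proof.
  intros Hf [[u|] [v [E _]]]; simpl in E; rewrite E; [|exact Hf].
  rewrite assoc, Hf. reflexivity.
Qed.

Lemma GreenL_idem_eq e f : idem mul e -> idem mul f -> mul e f = mul f e ->
  GreenL mul e f -> e = f.
Proof.
  intros He Hf Hef HL.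
  rewrite <- (GreenL_idem_mulr Hf HL), Hef.
  exact (GreenL_idem_mulr He (GreenL_sym HL)).
Qed.

Lemma GreenR_idem_eq e f : idem mul e -> idem mul f -> mul e f = mul f e ->
  GreenR mul e f -> e = f.
Proof.
  intros He Hf Hef HR.
  rewrite <- (GreenR_idem_mull Hf HR), <- Hef.
  exact (GreenR_idem_mull He (GreenR_sym HR)).
Qed.

Lemma Rstar_idem_mull (U : S -> Prop) a p : U p -> idem mul p ->
  Rstar_in mul U a p -> mul p a = a.
Proof. intros Up Hp HR. exact (proj2 (HR (Some p) None Up I) Hp). Qed.

Lemma Lstar_idem_mulr (U : S -> Prop) a q : U q -> idem mul q ->
  Lstar_in mul U a q -> mul a q = a.
Proof. intros Uq Hq HL. exact (proj2 (HL (Some q) None Uq I) Hq). Qed.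

Section Morphism.
Variable h : S -> S.
Hypothesis hM : forall a b, h (mul a b) = mul (h a) (h b).

Lemma idem_morph e : idem mul e -> idem mul (h e).
Proof. unfold idem. intros He. rewrite <- hM, He. reflexivity. Qed.

Lemma GreenL_morph a b : GreenL mul a b -> GreenL mul (h a) (h b).
Proof.
  intros [u [v [E F]]]. exists (option_map h u), (option_map h v).
  split; [rewrite E at 1; destruct u | rewrite F at 1; destruct v];
    simpl; auto.
Qed.

Lemma GreenR_morph a b : GreenR mul a b -> GreenR mul (h a) (h b).
Proof.
  intros [u [v [E F]]]. exists (option_map h u), (option_map h v).
  split; [rewrite E at 1; destruct u | rewrite F at 1; destruct v];
    simpl; auto.
Qed.

End Morphism.

Section Transversal.
Variables (S0 : S -> Prop) (bar : S -> S).
Hypothesis HS0 : adequate_transversal mul S0.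
Hypothesis Hbar : forall x, exists e f, tdecomp mul S0 x (bar x) e f.
Hypothesis Hadm : forall x y, bar (mul x y) = mul (bar x) (bar y).

Lemma bar_in x : S0 (bar x).
Proof. destruct (Hbar x) as [e [f [H _]]]. exact H. Qed.

Lemma transversal_idem_comm e f : S0 e -> S0 f -> idem mul e -> idem mul f ->
  mul e f = mul f e.
Proof. destruct HS0 as [_ [[_ Hcomm] _]]. exact (Hcomm e f). Qed.

(* [z = z^+ z z^*] is a decomposition of [z], so uniqueness forces [bar z = z]. *)
Lemma bar_id z : S0 z -> bar z = z.
Proof.
  intros Hz. destruct HS0 as [_ [[Hab _] [_ Huniq]]].
  destruct (Hab z Hz) as [[p [Hp [Hpi HpR]]] [q [Hq [Hqi HqL]]]].
  assert (Hdec : tdecomp mul S0 z z p q).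
  { repeat split; auto.
    - rewrite (Rstar_idem_mull Hp Hpi HpR), (Lstar_idem_mulr Hq Hqi HqL).
      reflexivity.
    - exists p. split; [exact (conj Hp (conj Hpi HpR)) | exists None, None; auto].
    - exists q. split; [exact (conj Hq (conj Hqi HqL)) | exists None, None; auto]. }
  destruct (Huniq z) as [xb [_ Hu]].
  transitivity xb; [|symmetry]; apply Hu; [apply Hbar | exists p, q; exact Hdec].
Qed.

Lemma bar_idem_GreenR_eq f q : S0 q -> idem mul f -> idem mul q ->
  GreenR mul f q -> bar f = q.
Proof.
  intros Hq Hf Hqi HR.
  apply GreenR_idem_eq; auto using idem_morph, transversal_idem_comm, bar_in.
  rewrite <- (bar_id Hq). exact (GreenR_morph Hadm HR).
Qed.

Lemma bar_idem_GreenL_eq e p : S0 p -> idem mul e -> idem mul p ->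
  GreenL mul e p -> bar e = p.
Proof.
  intros Hp He Hpi HL.
  apply GreenL_idem_eq; auto using idem_morph, transversal_idem_comm, bar_in.
  rewrite <- (bar_id Hp). exact (GreenL_morph Hadm HL).
Qed.

Lemma tdecomp_mul_bar_right x xb e f : tdecomp mul S0 x xb e f ->
  mul xb (bar f) = xb.
Proof.
  intros [_ [_ [Hf [_ [_ [q [[Hq [Hqi HqL]] HR]]]]]]].
  rewrite (bar_idem_GreenR_eq Hq Hf Hqi HR).
  exact (Lstar_idem_mulr Hq Hqi HqL).
Qed.

Lemma tdecomp_mul_bar_left x xb e f : tdecomp mul S0 x xb e f ->
  mul (bar e) xb = xb.
Proof.
  intros [_ [He [_ [_ [[p [[Hp [Hpi HpR]] HL]] _]]]]].
  rewrite (bar_idem_GreenL_eq Hp He Hpi HL).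
  exact (Rstar_idem_mull Hp Hpi HpR).
Qed.

End Transversal.

End Green.

Theorem lemma2p12 (S : Type) (mul : S -> S -> S)
  (Hassoc : associative_op mul)
  (Hqa : quasi_adequate mul)
  (S0 : S -> Prop) (HS0 : adequate_transversal mul S0)
  (bar : S -> S)
  (Hbar : forall x, exists e f, tdecomp mul S0 x (bar x) e f)
  (Hadm : forall x y, bar (mul x y) = mul (bar x) (bar y)) :
  forall (x y ex fx ey fy : S),
    tdecomp mul S0 x (bar x) ex fx ->
    tdecomp mul S0 y (bar y) ey fy ->
    bar (mul x y) = bar (mul (mul (mul (bar x) fx) ey) (bar y)).
Proof.
  intros x y ex fx ey fy Hx Hy.
  rewrite !Hadm, !(bar_id HS0 Hbar (bar_in Hbar _)).
  rewrite (tdecomp_mul_bar_right Hassoc HS0 Hbar Hadm Hx), <- Hassoc.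
  rewrite (tdecomp_mul_bar_left Hassoc HS0 Hbar Hadm Hy).
  reflexivity.
Qed.
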